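(* Let $q\ge 4$ be even. Suppose there exists a Steiner quadruple system on $B_q$ that satisfies the step property with respect to some total order on $B_q$. Then $N(4,q,1)=\dfrac{q^2(q+2)}{4}$.
   Context: $B_q=\{0,\dots,q-1\}$ and $B_q^n$ is the set of words of length $n$ over $B_q$. $N(n,q,1)$ is the maximum cardinality of a code $C\subseteq B_q^n$ capable of correcting single deletions, i.e. such that the sets $\lfloor x\rfloor_1$ ($x\in C$) of words obtained from $x$ by deleting one letter are pairwise disjoint (equivalently, the minimum deletion–insertion distance of $C$ exceeds 2). A Steiner quadruple system $SQS(q)$ on $B_q$ is a set of 4-element subsets (quadruples) of $B_q$ such that every 3-element subset of $B_q$ is contained in exactly one quadruple. Step property: given a total order $L_0<L_1<\cdots<L_{q-1}$ on $B_q=\{L_0,\dots,L_{q-1}\}$, the $SQS(q)$ satisfies the step property with respect to this order if for every $t\in\{0,\dots,q/2-1\}$ and every quadruple of the system of the form $\{L_{2t},L_{2t+1},L_a,L_b\}$, either $a<2t$ and $b<2t$, or $a>2t+1$ and $b>2t+1$. *)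

From mathcomp Require Import all_boot all_fingroup.
Set Implicit Arguments. Unset Strict Implicit. Unset Printing Implicit Defensive.

(* B_q = 'I_q; words of length n over B_q = n.-tuple 'I_q. *)

Definition del1 (T : eqType) (x : seq T) (k : nat) : seq T :=
  take k x ++ drop k.+1 x.

Definition del_ball (T : eqType) (x : seq T) : seq (seq T) :=
  [seq del1 x k | k <- iota 0 (size x)].

Definition single_del_correcting (q n : nat) (C : {set n.-tuple 'I_q}) : bool :=
  [forall x in C, forall y in C,
     (x != y) ==> ~~ has (fun w => w \in del_ball (val y)) (del_ball (val x))].

Definition N1 (n q : nat) : nat :=
  \max_(C : {set n.-tuple 'I_q} | single_del_correcting C) #|C|.

Definition is_SQS (q : nat) (S : {set {set 'I_q}}) : bool :=
  [forall Q in S, #|Q| == 4] &&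
  [forall T : {set 'I_q}, (#|T| == 3) ==> (#|[set Q in S | T \subset Q]| == 1)].

(* Step property w.r.t. the total order L_0 < L_1 < ... < L_{q-1},
   given by the bijection L : index -> element. *)
Definition step_property (q : nat) (S : {set {set 'I_q}}) (L : {perm 'I_q}) : Prop :=
  forall (t : nat) (i j : 'I_q), val i = t.*2 -> val j = (t.*2).+1 ->
  forall Q, Q \in S -> L i \in Q -> L j \in Q ->
  forall a b : 'I_q, L a \in Q -> L b \in Q ->
    a != i -> a != j -> b != i -> b != j ->
    ((val a < val i) && (val b < val i)) || ((val j < val a) && (val j < val b)).

From mathcomp Require Import all_boot all_fingroup zify.
Set Implicit Arguments. Unset Strict Implicit. Unset Printing Implicit Defensive.

(* Give a word [abc] of length 3 the weight [1 + [a = b] + [b = c] + [a = b = c]].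
   All of [B_q^3] weighs [q (q + 1)^2], and the deletion ball of any 4-word weighs
   at least 4, plus 1 for every letter [a] of the word whose ball contains an odd
   number of sandwiches [a v a] (with [v <> a]).  As [q] is even, each letter has
   an odd number [q - 1] of sandwiches, so in a code with disjoint balls either
   some ball holds an odd number of them or one of them (of weight 1) is left
   uncovered; hence [4 |C| + q <= q (q + 1)^2].
   Conversely, reorder [B_q] so that the step order is the natural one, and call
   [2t] and [2t + 1] partners.  The words [aabb], together with six or eight words
   on the letters of each quadruple of the system, form a code whose balls all
   weigh 4 and cover every 3-word except the [q] sandwiches of a letter and its
   partner.  The step property makes two partners in a quadruple its two smallest
   or its two largest letters, and it is what lets every other sandwich [aba] be
   covered inside the quadruple through [a], [b] and the partner of the larger
   of the two. *)

Section Words.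
Variable T : eqType.
Implicit Types (x z : seq T) (a : T).

Lemma del1_sub x k : {subset del1 x k <= x}.
Proof. by move=> u; rewrite /del1 mem_cat => /orP[/mem_take|/mem_drop]. Qed.

Lemma del_ball_sub x z : z \in del_ball x -> {subset z <= x}.
Proof. by case/mapP=> k _ ->; apply: del1_sub. Qed.

Lemma size_del_ball x z : z \in del_ball x -> size z = (size x).-1.
Proof.
case/mapP=> k; rewrite mem_iota add0n => /andP[_ hk] ->.
rewrite /del1 size_cat size_take size_drop hk; lia.
Qed.

Definition word_weight z : nat :=
  if z is [:: a; b; c] then 1 + (a == b) + (b == c) + ((a == b) && (b == c)) else 0.

Definition sandwich a z : bool :=
  if z is [:: u; v; w] then (u == a) && (w == a) && (v != a) else false.

Definition ball_weight x : nat := sumn (map word_weight (undup (del_ball x))).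

Definition odd_sandwich_letters x : nat :=
  sumn [seq (odd (count (sandwich a) (undup (del_ball x))) : nat) | a <- undup x].

End Words.

Lemma del_ball_map (T U : eqType) (f : T -> U) (x : seq T) :
  del_ball (map f x) = map (map f) (del_ball x).
Proof.
rewrite /del_ball size_map -map_comp; apply: eq_map => k /=.
by rewrite /del1 map_cat map_take map_drop.
Qed.

Lemma del_ball_mapP (T U : eqType) (f : T -> U) p w :
  w \in del_ball (map f p) -> exists2 z, z \in del_ball p & w = map f z.
Proof. by rewrite del_ball_map => /mapP[z hz ->]; exists z. Qed.

Lemma mem_map_in (T U : eqType) (f : T -> U) (s : seq T) a :
  {in a :: s &, injective f} -> (f a \in map f s) = (a \in s).
Proof.
move=> inj; apply/mapP/idP => [[b bs /inj eq_ab]|]; last by move=> ?; exists a.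
by rewrite eq_ab ?inE ?eqxx ?bs ?orbT.
Qed.

Lemma undup_map_in (T U : eqType) (f : T -> U) (s : seq T) :
  {in s &, injective f} -> undup (map f s) = map f (undup s).
Proof.
elim: s => //= a s IH inj.
rewrite mem_map_in // IH; first by case: (a \in s).
by move=> u v us vs; apply: inj; rewrite inE ?us ?vs orbT.
Qed.

Section InjectiveImage.
Variables (T U : eqType) (f : T -> U) (x : seq T).
Hypothesis f_inj : {in x &, injective f}.

Lemma undup_del_ball_map :
  undup (del_ball (map f x)) = map (map f) (undup (del_ball x)).
Proof.
rewrite del_ball_map undup_map_in // => z1 z2 h1 h2.
by apply: (inj_in_map f_inj); apply/allP; apply: del_ball_sub; [apply: h1|apply: h2].
Qed.

Lemma word_weight_map z : {subset z <= x} -> word_weight (map f z) = word_weight z.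
Proof.
case: z => [|a [|b [|c [|d z]]]] //= sub.
by rewrite !(inj_in_eq f_inj) // sub // !inE eqxx ?orbT.
Qed.

Lemma sandwich_map a z : a \in x -> {subset z <= x} -> sandwich (f a) (map f z) = sandwich a z.
Proof.
case: z => [|u [|v [|w [|d z]]]] //= ax sub.
by rewrite !(inj_in_eq f_inj) // sub // !inE eqxx ?orbT.
Qed.

Lemma ball_weight_map : ball_weight (map f x) = ball_weight x.
Proof.
rewrite /ball_weight undup_del_ball_map -map_comp; congr sumn; apply/eq_in_map => z.
by rewrite mem_undup => /del_ball_sub /word_weight_map.
Qed.

Lemma odd_sandwich_letters_map : odd_sandwich_letters (map f x) = odd_sandwich_letters x.
Proof.
rewrite /odd_sandwich_letters undup_del_ball_map undup_map_in // -map_comp.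
congr sumn; apply/eq_in_map => a; rewrite mem_undup => ax /=.
rewrite count_map; congr (nat_of_bool (odd _)); apply: eq_in_count => z.
by rewrite mem_undup => /del_ball_sub /(sandwich_map ax).
Qed.

End InjectiveImage.

Lemma ball_weight_ge_nat a b c d : a < 4 -> b < 4 -> c < 4 -> d < 4 ->
  4 + odd_sandwich_letters [:: a; b; c; d] <= ball_weight [:: a; b; c; d].
Proof.
by case: a => [|[|[|[|a]]]] //; case: b => [|[|[|[|b]]]] //;
   case: c => [|[|[|[|c]]]] //; case: d => [|[|[|[|d]]]].
Qed.

(* Replacing each letter by the position of its first occurrence is injective on
   the letters of [x], which reduces the bound to the finite check above. *)
Lemma ball_weight_ge (T : eqType) (x : seq T) :
  size x = 4 -> 4 + odd_sandwich_letters x <= ball_weight x.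
Proof.
case: x => [|a [|b [|c [|d [|e x]]]]] // _.
set x := [:: a; b; c; d]; set p := map (index^~ x) x.
have xE : map (nth a x) p = x.
  by rewrite -map_comp; apply: map_id_in => u ux /=; rewrite nth_index.
have nth_inj : {in p &, injective (nth a x)}.
  by move=> i j /mapP[u ux ->] /mapP[v vx ->]; rewrite !nth_index // => ->.
rewrite -xE ball_weight_map // odd_sandwich_letters_map //.
by apply: ball_weight_ge_nat; rewrite index_mem !inE eqxx ?orbT.
Qed.

Section Triples.
Variable T : finType.
Local Notation triple := (T * T * T)%type.
Implicit Types (y : triple) (a b : T).

Definition trip y : seq T := [:: y.1.1; y.1.2; y.2].

Lemma sum_trip_eq (z : seq T) (G : seq T -> nat) : size z = 3 ->
  \sum_(y | trip y == z) G (trip y) = G z.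
Proof.
case: z => [|a [|b [|c [|? ?]]]] // _; rewrite (big_pred1 (a, b, c)) // => -[[u v] w].
by rewrite /trip /= !eqseq_cons andbT !xpair_eqE andbA.
Qed.

Lemma sum_trip_mem (s : seq (seq T)) (G : seq T -> nat) :
  uniq s -> all (fun z => size z == 3) s ->
  \sum_(y | trip y \in s) G (trip y) = sumn (map G s).
Proof.
elim: s => [|z s IH] /=; first by rewrite big_pred0.
case/andP=> zs us /andP[/eqP sz ss]; rewrite (bigID (fun y => trip y == z)) /=.
rewrite -(sum_trip_eq G sz) -IH //; congr (_ + _); apply: eq_bigl => y; rewrite inE.
  by case: (trip y == z); rewrite ?andbT ?andbF.
by case: (trip y =P z) => [->|_] /=; rewrite ?(negbTE zs) ?andbT.
Qed.

Lemma sumn_ball (x : seq T) (G : seq T -> nat) : size x = 4 ->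
  sumn (map G (undup (del_ball x))) = \sum_y G (trip y) * (trip y \in del_ball x).
Proof.
move=> sx; rewrite -sum_trip_mem ?undup_uniq //; last first.
  by apply/allP => z; rewrite mem_undup => /size_del_ball ->; rewrite sx.
rewrite big_mkcond; apply: eq_bigr => y _; rewrite mem_undup.
by case: (_ \in _); rewrite ?muln1 ?muln0.
Qed.

Lemma sum_triple (F : triple -> nat) :
  \sum_y F y = \sum_a \sum_b \sum_(c : T) F (a, b, c).
Proof.
rewrite (pair_bigA _ (fun a b => \sum_(c : T) F (a, b, c))) pair_bigA.
by apply: eq_bigr => -[[a b] c].
Qed.

Lemma sum_eqb1 a : \sum_b (a == b) = 1.
Proof. by rewrite (bigD1 a) //= eqxx big1 // => b /negbTE; rewrite eq_sym => ->. Qed.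

Lemma sum_word_weight : \sum_y word_weight (trip y) = #|T| ^ 3 + 2 * #|T| ^ 2 + #|T|.
Proof.
have -> : \sum_y word_weight (trip y) =
    \sum_(y : triple) 1 + \sum_(y : triple) (y.1.1 == y.1.2) + \sum_(y : triple) (y.1.2 == y.2)
    + \sum_(y : triple) ((y.1.1 == y.1.2) && (y.1.2 == y.2)).
  by rewrite -!big_split.
rewrite sum1_card !card_prod !sum_triple /=.
have -> : \sum_(a : T) \sum_(b : T) \sum_(c : T) (a == b) = #|T| ^ 2.
  transitivity (\sum_(a : T) #|T|); last by rewrite sum_nat_const.
  apply: eq_bigr => a _; transitivity (\sum_b (a == b) * #|T|).
    by apply: eq_bigr => b _; rewrite sum_nat_const mulnC.
  by rewrite -big_distrl /= sum_eqb1 mul1n.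
have -> : \sum_(a : T) \sum_(b : T) \sum_(c : T) (b == c) = #|T| ^ 2.
  transitivity (\sum_(a : T) #|T|); last by rewrite sum_nat_const.
  by apply: eq_bigr => a _; rewrite -sum1_card; apply: eq_bigr => b _; apply: sum_eqb1.
have -> : \sum_(a : T) \sum_(b : T) \sum_(c : T) ((a == b) && (b == c)) = #|T|.
  rewrite -sum1_card; apply: eq_bigr => a _; rewrite -(sum_eqb1 a).
  apply: eq_bigr => b _; case: (a =P b) => [<-|_]; last by rewrite big1.
  exact: sum_eqb1.
by rewrite !expnS expn0 !muln1 mulnA mul2n -addnn !addnA.
Qed.

Lemma sum_sandwich a : \sum_y sandwich a (trip y) = #|T| - 1.
Proof.
rewrite sum_triple (bigD1 a) //= [X in _ + X]big1 ?addn0; last first.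
  by move=> u /negbTE ua; apply: big1 => v _; apply: big1 => w _; rewrite /trip /= ua.
transitivity (\sum_(v : T) (v != a)).
  apply: eq_bigr => v _; rewrite (bigD1 a) //= big1 ?addn0; first by rewrite /trip /= eqxx.
  by move=> w /negbTE wa; rewrite /trip /= wa andbF.
rewrite (bigID (fun v => v != a)) /= [X in _ + X]big1 => [|v /negbNE -> //].
by rewrite addn0 (eq_bigr (fun _ => 1)) => [|v ->]; rewrite // sum1_card cardC1 subn1.
Qed.

Lemma sum_sandwich_le1 y : \sum_a sandwich a (trip y) <= 1.
Proof.
rewrite (bigD1 y.1.1) //= big1 ?addn0 ?leq_b1 // => a ay.
by rewrite /trip /=; case: eqP => // ya; rewrite ya eqxx in ay.
Qed.

Lemma word_weight_ge1 y : 0 < word_weight (trip y).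
Proof. by rewrite /word_weight /trip /= -!addnA. Qed.
End Triples.

Lemma sum_odd_sandwich_letters (T : finType) (x : seq T) :
  \sum_(a : T) odd (count (sandwich a) (undup (del_ball x))) = odd_sandwich_letters x.
Proof.
rewrite /odd_sandwich_letters sumnE big_map [RHS]big_uniq ?undup_uniq //.
rewrite [RHS]big_mkcond; apply: eq_bigr => a _; rewrite mem_undup; case: ifP => // ax.
suff -> : count (sandwich a) (undup (del_ball x)) = 0 by [].
apply/eqP; rewrite -leqn0 leqNgt -has_count; apply/hasP => -[z].
rewrite mem_undup => /del_ball_sub z_x.
case: z z_x => [|u [|v [|w [|? ?]]]] //= z_x /andP[/andP[/eqP ua _] _].
by move: ax; rewrite -ua z_x // inE eqxx.
Qed.

Lemma sum_bool_le1 (I : finType) (A P : pred I) :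
  {in A &, forall i j, P i -> P j -> i = j} -> \sum_(i in A) P i <= 1.
Proof.
move=> uniqP; rewrite (eq_bigr (fun i => if P i then 1 else 0)) => [|i _]; last by case: (P i).
rewrite -big_mkcondr sum1dep_card; apply/card_le1_eqP => i j.
by rewrite !inE => /andP[iA Pi] /andP[jA Pj]; apply: uniqP.
Qed.

Lemma odd_sum_le (I : finType) (A : pred I) (F : I -> nat) :
  odd (\sum_(i in A) F i) <= \sum_(i in A) odd (F i).
Proof.
apply: (big_rec2 (fun a b => odd a <= b)) => // i a b _ h.
by rewrite oddD; apply: leq_trans (leq_add (leqnn (odd (F i))) h); case: (odd (F i)); case: (odd a).
Qed.

Lemma sdc_ball_disjoint q n (C : {set n.-tuple 'I_q}) x y w :
  single_del_correcting C -> x \in C -> y \in C ->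
  w \in del_ball (val x) -> w \in del_ball (val y) -> x = y.
Proof.
move=> /forallP/(_ x)/implyP sdc xC yC wx wy; apply/eqP/negPn/negP => nxy.
move: (sdc xC) => /forallP/(_ y)/implyP/(_ yC)/implyP/(_ nxy)/hasPn/(_ w wx).
by rewrite wy.
Qed.

Section Codes.
Variables (q : nat) (C : {set 4.-tuple 'I_q}).
Local Notation triple := ('I_q * 'I_q * 'I_q)%type.

Definition cover_count (y : triple) : nat := \sum_(x in C) (trip y \in del_ball (val x)).

Definition uncovered_weight : nat :=
  \sum_(y : triple) word_weight (trip y) * (1 - cover_count y).

Lemma sum_cover_count (G : seq 'I_q -> nat) :
  \sum_(x in C) sumn (map G (undup (del_ball (val x)))) = \sum_y G (trip y) * cover_count y.
Proof.
under eq_bigr => x _ do rewrite sumn_ball ?size_tuple //.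
by rewrite exchange_big; apply: eq_bigr => y _; rewrite /cover_count big_distrr.
Qed.

Hypothesis C_sdc : single_del_correcting C.

Lemma cover_count_le1 y : cover_count y <= 1.
Proof. by apply: sum_bool_le1 => x1 x2 x1C x2C; apply: (sdc_ball_disjoint C_sdc x1C x2C). Qed.

Lemma split_covered (G : triple -> nat) :
  \sum_y G y * cover_count y + \sum_y G y * (1 - cover_count y) = \sum_y G y.
Proof.
by rewrite -big_split /=; apply: eq_bigr => y _; rewrite -mulnDr subnKC ?cover_count_le1 ?muln1.
Qed.

Lemma weight_balance :
  \sum_(x in C) ball_weight (val x) + uncovered_weight = q ^ 3 + 2 * q ^ 2 + q.
Proof.
by rewrite (sum_cover_count (@word_weight _)) split_covered sum_word_weight card_ord.
Qed.

Lemma sandwich_balance a :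
  \sum_(x in C) count (sandwich a) (undup (del_ball (val x)))
  + \sum_y sandwich a (trip y) * (1 - cover_count y) = q - 1.
Proof.
under eq_bigr => x _ do rewrite -sumn_count.
by rewrite (sum_cover_count (sandwich a)) split_covered sum_sandwich card_ord.
Qed.

Hypothesis q_even : ~~ odd q.

(* The [q - 1] sandwiches of [a] are an odd number, so they are not all covered
   by disjoint balls each holding an even number of them. *)
Lemma letter_defect a :
  0 < \sum_(x in C) odd (count (sandwich a) (undup (del_ball (val x))))
      + \sum_y sandwich a (trip y) * (1 - cover_count y).
Proof.
have q_pos : 0 < q by apply: leq_ltn_trans (ltn_ord a).
have : odd (q - 1) by rewrite oddB // (negbTE q_even).
rewrite -(sandwich_balance a) oddD => odd_sum.
apply: leq_trans (leq_add (odd_sum_le _ _) (leqnn _)).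
by move: odd_sum; case: (odd _) => //=; case: (\sum_y _).
Qed.

Lemma card_le_defect :
  q <= \sum_(x in C) odd_sandwich_letters (val x) + uncovered_weight.
Proof.
have := leq_sum (index_enum 'I_q) (fun (a : 'I_q) (_ : true) => letter_defect a).
rewrite sum1_card card_ord => /leq_trans; apply.
rewrite big_split /= leq_add //.
  by rewrite exchange_big; apply: eq_leq; apply: eq_bigr => x _; apply: sum_odd_sandwich_letters.
rewrite exchange_big; apply: leq_sum => y _; rewrite -big_distrl /=.
by apply: leq_mul => //; apply: leq_trans (sum_sandwich_le1 y) (word_weight_ge1 y).
Qed.

Lemma code_card_ub : #|C| * 4 + q <= q ^ 3 + 2 * q ^ 2 + q.
Proof.
rewrite -weight_balance.
have ball_ge : #|C| * 4 + \sum_(x in C) odd_sandwich_letters (val x)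
               <= \sum_(x in C) ball_weight (val x).
  rewrite -sum1_card big_distrl /= -big_split /=; apply: leq_sum => x _.
  by rewrite mul1n ball_weight_ge ?size_tuple.
by apply: leq_trans (leq_add ball_ge (leqnn _)); rewrite -addnA leq_add2l card_le_defect.
Qed.

End Codes.

Section Reordering.
Variables (q : nat) (L : {perm 'I_q}) (S : {set {set 'I_q}}).

Definition relabel_system : {set {set 'I_q}} := [set L @^-1: Q | Q : {set 'I_q} in S].

Lemma preimset_perm_inj : injective (fun Q : {set 'I_q} => L @^-1: Q).
Proof.
by move=> Q1 Q2 /setP eQ; apply/setP => x; have := eQ (L^-1 x)%g; rewrite !inE permKV.
Qed.

Lemma is_SQS_relabel : is_SQS S -> is_SQS relabel_system.
Proof.
case/andP=> /forallP card4 /forallP triple1; apply/andP; split.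
  apply/forallP => Q'; apply/implyP => /imsetP[Q QS ->].
  by rewrite card_preimset; [move: (card4 Q); rewrite QS | exact: perm_inj].
apply/forallP => T; apply/implyP => T3.
have -> : [set Q' in relabel_system | T \subset Q'] =
          [set L @^-1: Q | Q : {set 'I_q} in [set Q in S | L @: T \subset Q]].
  apply/setP => Q'; rewrite inE; apply/andP/imsetP.
    by case=> /imsetP[Q QS ->]; rewrite -sub_imset_pre => sub; exists Q; rewrite ?inE ?QS.
  case=> Q; rewrite inE => /andP[QS sub] ->.
  by split; [exact: imset_f | rewrite -sub_imset_pre].
rewrite card_imset; last exact: preimset_perm_inj.
by move: (triple1 (L @: T)); rewrite card_imset ?T3 //; exact: perm_inj.
Qed.

Lemma step_property_relabel : step_property S L -> step_property relabel_system 1.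
Proof.
move=> step t i j ti tj Q' /imsetP[Q QS ->] iQ jQ a b aQ bQ.
rewrite !inE !perm1 in iQ jQ aQ bQ.
exact: (step t i j ti tj Q QS iQ jQ a b aQ bQ).
Qed.

End Reordering.

(* Words over the positions [0 < 1 < 2 < 3] of a quadruple.  The balls of
   [plain_words] partition the ordered triples of distinct positions; the balls
   of [top_pair_words] also cover each [i j i] with [i], [j] on different sides
   of the top pair [{2, 3}] (a [split_sandwich]). *)
Definition plain_words : seq (seq nat) :=
  [:: [:: 0; 1; 2; 3]; [:: 0; 3; 2; 1]; [:: 1; 3; 0; 2]; [:: 2; 1; 0; 3];
      [:: 3; 1; 2; 0]; [:: 2; 3; 0; 1]].

Definition top_pair_words : seq (seq nat) :=
  [:: [:: 2; 0; 1; 2]; [:: 3; 0; 1; 3]; [:: 0; 2; 3; 0]; [:: 1; 2; 3; 1];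
      [:: 0; 3; 2; 1]; [:: 1; 3; 0; 2]; [:: 2; 1; 0; 3]; [:: 3; 1; 2; 0]].

Definition split_sandwich (z : seq nat) : bool :=
  if z is [:: i; j; k] then (i == k) && ((i < 2) (+) (j < 2)) else false.

Definition position_design (ws : seq (seq nat)) : bool :=
  all (fun p => [&& size p == 4, all (fun i => i < 4) p & ball_weight p == 4]) ws &&
  all (fun p1 => all (fun p2 =>
    (p1 == p2) || ~~ has (fun z => z \in del_ball p2) (del_ball p1)) ws) ws.

Lemma position_design_plain : position_design plain_words. Proof. by []. Qed.
Lemma position_design_top_pair : position_design top_pair_words. Proof. by []. Qed.

Lemma plain_words_ball_uniq : all (fun p => all uniq (del_ball p)) plain_words.
Proof. by []. Qed.

Lemma top_pair_words_ball_shape :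
  all (fun p => all (fun z => uniq z || split_sandwich z) (del_ball p)) top_pair_words.
Proof. by []. Qed.

Lemma design_cover_distinct (ws : seq (seq nat)) :
  ws = plain_words \/ ws = top_pair_words ->
  forall i j k, i < 4 -> j < 4 -> k < 4 -> uniq [:: i; j; k] ->
  has (fun p => [:: i; j; k] \in del_ball p) ws.
Proof.
move=> ws_eq i j k.
by case: i => [|[|[|[|i]]]] //; case: j => [|[|[|[|j]]]] //; case: k => [|[|[|[|k]]]] //;
   case: ws_eq => ->.
Qed.

Lemma top_pair_words_cover_split i j : i < 4 -> j < 4 -> split_sandwich [:: i; j; i] ->
  has (fun p => [:: i; j; i] \in del_ball p) top_pair_words.
Proof. by case: i => [|[|[|[|i]]]] //; case: j => [|[|[|[|j]]]]. Qed.

Lemma step_positions k l : k < l -> l < 4 ->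
  (forall m n, m < 4 -> n < 4 -> m != k -> m != l -> n != k -> n != l ->
     ((m < k) && (n < k)) || ((l < m) && (l < n))) ->
  ((k == 0) && (l == 1)) || ((k == 2) && (l == 3)).
Proof.
move=> kl l4 step.
case: k l kl l4 step => [|[|[|[|k]]]] [|[|[|[|l]]]] //= _ _ step;
 first [ by move/(_ 1 3 isT isT isT isT isT isT): step
       | by move/(_ 1 2 isT isT isT isT isT isT): step
       | by move/(_ 0 3 isT isT isT isT isT isT): step
       | by move/(_ 0 2 isT isT isT isT isT isT): step ].
Qed.

Lemma split_sandwich_third i j : i < 4 -> j < 4 -> split_sandwich [:: i; j; i] ->
  let k := 5 - maxn i j in
  [&& k < 4, k != i, k != j &
    ((i < j) && (((j == 2) && (k == 3)) || ((j == 3) && (k == 2))))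
    || ((j < i) && (((i == 2) && (k == 3)) || ((i == 3) && (k == 2))))].
Proof. by case: i => [|[|[|[|i]]]] //; case: j => [|[|[|[|j]]]]. Qed.

Lemma enum_ltn_sorted q (Q : {set 'I_q}) : sorted (fun a b : 'I_q => val a < val b) (enum Q).
Proof.
have -> : enum Q = [seq x <- enum 'I_q | x \in Q] by rewrite enumT.
apply: sorted_filter; first by move=> a b c; apply: ltn_trans.
by have := iota_ltn_sorted 0 q; rewrite -val_enum_ord sorted_map.
Qed.

Lemma card3 (T : finType) (a b c : T) : a != b -> a != c -> b != c -> #|[set a; b; c]| = 3.
Proof.
by move=> ab ac bc; rewrite -setUA cardsU1 cards2 bc !inE negb_or ab ac.
Qed.

Lemma half_eq_lt x y : x./2 = y./2 -> x < y -> x = (x./2).*2 /\ y = x.+1.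
Proof. lia. Qed.

Lemma half_eq_unique x y z : x./2 = y./2 -> x != y -> z./2 = y./2 -> z != y -> x = z.
Proof. move=> ? /eqP ? ? /eqP ?; lia. Qed.

Section Partners.
Variables (q : nat) (q_even : ~~ odd q).
Implicit Types (b c : 'I_q).

Lemma partner_exists b : exists c : 'I_q, (c != b) && ((val c)./2 == (val b)./2).
Proof.
case: b => n n_q; have [c c_n] : exists c : 'I_q, val c = if odd n then n.-1 else n.+1.
  by case: (boolP (odd n)) => n_odd; [have lt : n.-1 < q | have lt : n.+1 < q];
     move: q_even; try lia; exists (Ordinal lt).
by exists c; rewrite -val_eqE c_n /=; case: ifP; lia.
Qed.

Definition partner (b : 'I_q) : 'I_q := xchoose (partner_exists b).

Lemma partner_neq b : partner b != b.
Proof. by case/andP: (xchooseP (partner_exists b)). Qed.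

Lemma half_partner b : (val (partner b))./2 = (val b)./2.
Proof. by case/andP: (xchooseP (partner_exists b)) => _ /eqP. Qed.

Lemma partnerP b c : c != b -> (val c)./2 = (val b)./2 -> c = partner b.
Proof.
move=> cb same_half; apply: val_inj.
by apply: (half_eq_unique same_half _ (half_partner b)); rewrite val_eqE ?partner_neq.
Qed.

Lemma partnerK : involutive partner.
Proof. by move=> b; apply/esym/partnerP; rewrite ?half_partner // eq_sym partner_neq. Qed.

End Partners.

Section Construction.
Variables (q : nat) (S : {set {set 'I_q}}).
Hypotheses (q4 : 4 <= q) (q_even : ~~ odd q) (S_SQS : is_SQS S) (S_step : step_property S 1).
Implicit Types (Q T : {set 'I_q}).
Local Notation partner := (partner q_even).

Lemma quad_card Q : Q \in S -> #|Q| = 4.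
Proof. by case/andP: S_SQS => /forallP/(_ Q)/implyP h _ /h/eqP. Qed.

Lemma triple_quads T : #|T| = 3 -> #|[set Q in S | T \subset Q]| = 1.
Proof. by case/andP: S_SQS => _ /forallP/(_ T)/implyP h /eqP/h/eqP. Qed.

Lemma quad_of_triple T : #|T| = 3 -> exists2 Q, Q \in S & T \subset Q.
Proof.
move=> /triple_quads/eqP/cards1P[Q0 e]; have : Q0 \in [set Q in S | T \subset Q] by rewrite e set11.
by rewrite inE => /andP[]; exists Q0.
Qed.

Lemma quad_of_triple_unique Q1 Q2 T : Q1 \in S -> Q2 \in S -> #|T| = 3 ->
  T \subset Q1 -> T \subset Q2 -> Q1 = Q2.
Proof.
move=> Q1S Q2S /triple_quads/eqP/cards1P[Q0 e] sub1 sub2.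
have : Q1 \in [set Q in S | T \subset Q] by rewrite inE Q1S sub1.
have : Q2 \in [set Q in S | T \subset Q] by rewrite inE Q2S sub2.
by rewrite e !inE => /eqP -> /eqP ->.
Qed.

Definition letter0 : 'I_q := Ordinal (leq_trans (isT : 0 < 4) q4).

(* [enum] lists a set of ordinals in increasing order, so [qnth Q i] is the
   [i]-th smallest element of [Q]. *)
Definition qnth (Q : {set 'I_q}) (i : nat) : 'I_q := nth letter0 (enum Q) i.

Section Quadruple.
Variable Q : {set 'I_q}.
Hypothesis Q4 : #|Q| = 4.

Lemma size_enum_quad : size (enum Q) = 4.
Proof. by rewrite -cardE. Qed.

Lemma qnth_mem i : i < 4 -> qnth Q i \in Q.
Proof. by move=> i4; rewrite -mem_enum mem_nth // size_enum_quad. Qed.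

Lemma qnth_inj i j : i < 4 -> j < 4 -> qnth Q i = qnth Q j -> i = j.
Proof.
by move=> i4 j4 /eqP; rewrite nth_uniq ?size_enum_quad ?enum_uniq // => /eqP.
Qed.

Lemma qnth_neq i j : i < 4 -> j < 4 -> i != j -> qnth Q i != qnth Q j.
Proof. by move=> i4 j4; apply: contra => /eqP /(qnth_inj i4 j4) ->. Qed.

Lemma qnth_ltn_mono i j : j < 4 -> i < j -> val (qnth Q i) < val (qnth Q j).
Proof.
move=> j4 ij; have ltn_trans' : transitive (fun a b : 'I_q => val a < val b).
  by move=> a b c; apply: ltn_trans.
apply: (sorted_ltn_nth ltn_trans' letter0 (enum_ltn_sorted Q));
by rewrite ?inE ?size_enum_quad // (ltn_trans ij).
Qed.

Lemma qnth_ltn i j : i < 4 -> j < 4 -> (val (qnth Q i) < val (qnth Q j)) = (i < j).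
Proof.
move=> i4 j4; case: (ltngtP i j) => [ij|ji|->]; first exact: qnth_ltn_mono.
  by apply/negbTE; rewrite -leqNgt ltnW // qnth_ltn_mono.
by rewrite ltnn.
Qed.

Lemma qnthP a : a \in Q -> exists2 i, i < 4 & a = qnth Q i.
Proof.
move=> aQ; exists (index a (enum Q)); first by rewrite -size_enum_quad index_mem mem_enum.
by rewrite /qnth nth_index // mem_enum.
Qed.

End Quadruple.

Lemma step_natural_order (t : nat) (i j : 'I_q) : val i = t.*2 -> val j = t.*2.+1 ->
  forall Q, Q \in S -> i \in Q -> j \in Q -> forall a b : 'I_q, a \in Q -> b \in Q ->
  a != i -> a != j -> b != i -> b != j ->
  ((val a < val i) && (val b < val i)) || ((val j < val a) && (val j < val b)).
Proof. by move=> ti tj Q QS iQ jQ a b aQ bQ; apply: (S_step ti tj QS); rewrite perm1. Qed.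

Lemma partner_positions Q k l : Q \in S -> k < l -> l < 4 ->
  (val (qnth Q k))./2 = (val (qnth Q l))./2 ->
  ((k == 0) && (l == 1)) || ((k == 2) && (l == 3)).
Proof.
move=> QS kl l4 same_half; have Q4 := quad_card QS; have k4 : k < 4 := ltn_trans kl l4.
have [k_even l_succ] := half_eq_lt same_half (qnth_ltn_mono Q4 l4 kl).
apply: step_positions => // m n m4 n4 mk ml nk nl.
have l_odd : val (qnth Q l) = (val (qnth Q k))./2.*2.+1 by rewrite l_succ -k_even.
have := step_natural_order k_even l_odd QS (qnth_mem Q4 k4) (qnth_mem Q4 l4) (qnth_mem Q4 m4)
  (qnth_mem Q4 n4) (qnth_neq Q4 m4 k4 mk) (qnth_neq Q4 m4 l4 ml) (qnth_neq Q4 n4 k4 nk)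
  (qnth_neq Q4 n4 l4 nl).
by rewrite !qnth_ltn.
Qed.

Definition top_pair Q : bool := (val (qnth Q 2))./2 == (val (qnth Q 3))./2.

Definition quad_words Q : seq (seq nat) := if top_pair Q then top_pair_words else plain_words.

Definition code_word (s : seq 'I_q) : bool :=
  [exists a : 'I_q, exists b : 'I_q, s == [:: a; a; b; b]]
  || [exists Q in S, has (fun p => s == map (qnth Q) p) (quad_words Q)].

Definition code : {set 4.-tuple 'I_q} := [set x | code_word (val x)].

Lemma quad_words_design Q : position_design (quad_words Q).
Proof.
by rewrite /quad_words; case: top_pair; [exact: position_design_top_pair | exact: position_design_plain].
Qed.

Lemma quad_word_props Q p : p \in quad_words Q ->
  [/\ size p = 4, all (fun i => i < 4) p & ball_weight p = 4].
Proof.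
by move=> pQ; case/andP: (quad_words_design Q) => /allP/(_ p pQ)/and3P[/eqP -> -> /eqP ->].
Qed.

Lemma quad_words_ball_eq Q p1 p2 z : p1 \in quad_words Q -> p2 \in quad_words Q ->
  z \in del_ball p1 -> z \in del_ball p2 -> p1 = p2.
Proof.
move=> p1Q p2Q z1 z2; case/andP: (quad_words_design Q) => _.
move=> /allP/(_ p1 p1Q)/allP/(_ p2 p2Q)/orP[/eqP //|/hasPn/(_ z z1)].
by rewrite z2.
Qed.

Lemma quad_word_ball_shape Q p z : p \in quad_words Q -> z \in del_ball p ->
  uniq z || (top_pair Q && split_sandwich z).
Proof.
rewrite /quad_words; case: top_pair => pQ zp /=.
  exact: (allP (allP top_pair_words_ball_shape p pQ) z zp).
by rewrite (allP (allP plain_words_ball_uniq p pQ) z zp).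
Qed.

Lemma quad_word_ball_letters Q p z : p \in quad_words Q -> z \in del_ball p ->
  size z = 3 /\ all (fun i => i < 4) z.
Proof.
move=> pQ zp; have [p_size p_lt _] := quad_word_props pQ; split.
  by rewrite (size_del_ball zp) p_size.
by apply/allP => i /(del_ball_sub zp) ip; exact: (allP p_lt).
Qed.

Lemma qnth_inj_in Q (p : seq nat) : Q \in S -> all (fun i => i < 4) p ->
  {in p &, injective (qnth Q)}.
Proof. by move=> QS /allP p_lt i j ip jp; apply: (qnth_inj (quad_card QS)); apply: p_lt. Qed.

Lemma ball_weight_pair_word (a b : 'I_q) : ball_weight [:: a; a; b; b] = 4.
Proof.
case: (a =P b) => [<-|/eqP ab].
  rewrite -[[:: a; a; a; a]]/(map (fun=> a) [:: 0; 0; 0; 0]) ball_weight_map //.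
  by move=> [|i] [|j]; rewrite !inE.
rewrite -[[:: a; a; b; b]]/(map (fun i => if i == 0 then a else b) [:: 0; 0; 1; 1]).
rewrite ball_weight_map // => -[|[|i]] [|[|j]] //=; rewrite ?inE //= => _ _ /eqP.
  by rewrite (negbTE ab).
by rewrite eq_sym (negbTE ab).
Qed.

Lemma ball_weight_code_word s : code_word s -> ball_weight s = 4.
Proof.
case/orP => [/existsP[a /existsP[b /eqP ->]]|]; first exact: ball_weight_pair_word.
case/existsP => Q /andP[QS /hasP[p pQ /eqP ->]].
have [_ p_lt p_weight] := quad_word_props pQ.
by rewrite ball_weight_map ?p_weight //; apply: qnth_inj_in.
Qed.

Lemma code_wordP s : code_word s ->
  (exists a b, s = [:: a; a; b; b]) \/
  exists Q p, [/\ Q \in S, p \in quad_words Q & s = map (qnth Q) p].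
Proof.
case/orP => [/existsP[a /existsP[b /eqP ->]]|]; first by left; exists a, b.
by case/existsP => Q /andP[QS /hasP[p pQ /eqP ->]]; right; exists Q, p.
Qed.

Lemma pair_word_ball (a b d : 'I_q) w : w \in del_ball [:: a; a; b; b] ->
  [:: a; a; b; b] = [:: nth d w 0; nth d w 0; nth d w 2; nth d w 2] /\
  ((nth d w 0 == nth d w 1) || (nth d w 1 == nth d w 2)).
Proof. by rewrite !inE => /or4P[] /eqP -> /=; rewrite eqxx ?orbT. Qed.

Lemma quad_word_ball_adjacent Q p z : Q \in S -> p \in quad_words Q -> z \in del_ball p ->
  forall a, (nth a (map (qnth Q) z) 0 != nth a (map (qnth Q) z) 1) &&
            (nth a (map (qnth Q) z) 1 != nth a (map (qnth Q) z) 2).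
Proof.
move=> QS pQ zp a; have Q4 := quad_card QS.
have [z_size z_lt] := quad_word_ball_letters pQ zp; have z_shape := quad_word_ball_shape pQ zp.
case: z z_size z_lt z_shape {zp} => [|i [|j [|k [|? ?]]]] // _ /and4P[i4 j4 k4 _] /= z_shape.
suff [ij jk] : i != j /\ j != k by rewrite !qnth_neq.
case/orP: z_shape => [|/andP[_ /andP[/eqP <- ij]]].
  by rewrite !inE negb_or => /and3P[/andP[]].
by split; rewrite // eq_sym; apply: contraTneq ij => ->; rewrite addbb.
Qed.

Definition max_letter (a b : 'I_q) : 'I_q := if val a < val b then b else a.

(* Three letters of the quadruple a ball word [w] comes from, read off [w] alone:
   for a sandwich [aba], the third one is the partner of the larger of [a], [b]. *)
Definition ball_triple (w : seq 'I_q) : {set 'I_q} :=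
  if w is [:: a; b; c] then
    if a == c then [set a; b; partner (max_letter a b)] else [set a; b; c]
  else set0.

Lemma split_sandwich_partner Q i j : Q \in S -> top_pair Q -> i < 4 -> j < 4 ->
  split_sandwich [:: i; j; i] ->
  exists2 k, [&& k < 4, k != i & k != j] & qnth Q k = partner (max_letter (qnth Q i) (qnth Q j)).
Proof.
move=> QS /eqP top i4 j4 ij_split; have Q4 := quad_card QS.
have /and4P[k4 ki kj pos] := split_sandwich_third i4 j4 ij_split.
exists (5 - maxn i j); first by rewrite k4 ki kj.
rewrite /max_letter qnth_ltn //; case/orP: pos => /andP[ij top_pos].
  rewrite ij; apply: partnerP; first exact: qnth_neq.
  by case/orP: top_pos => /andP[/eqP -> /eqP ->].
rewrite ltnNge (ltnW ij) /=; apply: partnerP; first exact: qnth_neq.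
by case/orP: top_pos => /andP[/eqP -> /eqP ->].
Qed.

Lemma quad_word_ball_triple Q p z : Q \in S -> p \in quad_words Q -> z \in del_ball p ->
  #|ball_triple (map (qnth Q) z)| = 3 /\ ball_triple (map (qnth Q) z) \subset Q.
Proof.
move=> QS pQ zp; have Q4 := quad_card QS.
have [z_size z_lt] := quad_word_ball_letters pQ zp; have z_shape := quad_word_ball_shape pQ zp.
case: z z_size z_lt z_shape {zp} => [|i [|j [|k [|? ?]]]] // _ /and4P[i4 j4 k4 _] /= z_shape.
have triple_sub (u v w : 'I_q) : [&& u \in Q, v \in Q & w \in Q] -> [set u; v; w] \subset Q.
  by case/and3P=> uQ vQ wQ; apply/subsetP => x; rewrite !inE => /orP[/orP[]|] /eqP ->.
case/orP: z_shape => [|/andP[top /andP[/eqP ki ij_split]]].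
  rewrite !inE negb_or andbT => /andP[/andP[ij ik] jk].
  rewrite (negbTE (qnth_neq Q4 i4 k4 ik)) card3 ?qnth_neq //.
  by split=> //; apply: triple_sub; rewrite !qnth_mem.
subst k; rewrite eqxx; have ij : i != j by apply: contraTneq ij_split => ->; rewrite addbb.
have ij_split' : split_sandwich [:: i; j; i] by rewrite /= eqxx.
have [l /and3P[l4 li lj] <-] := split_sandwich_partner QS top i4 j4 ij_split'.
rewrite card3 ?qnth_neq // 1?eq_sym //; split=> //.
by apply: triple_sub; rewrite !qnth_mem.
Qed.

Lemma quad_word_ball_quad_eq Q1 Q2 p1 p2 z1 z2 : Q1 \in S -> Q2 \in S ->
  p1 \in quad_words Q1 -> p2 \in quad_words Q2 -> z1 \in del_ball p1 -> z2 \in del_ball p2 ->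
  map (qnth Q1) z1 = map (qnth Q2) z2 -> Q1 = Q2.
Proof.
move=> Q1S Q2S p1Q p2Q z1p z2p w_eq.
have [T3 sub1] := quad_word_ball_triple Q1S p1Q z1p.
have [_ sub2] := quad_word_ball_triple Q2S p2Q z2p.
by rewrite w_eq in T3 sub1; apply: quad_of_triple_unique T3 sub1 sub2.
Qed.

Lemma quad_word_ball_eq Q1 Q2 p1 p2 w : Q1 \in S -> Q2 \in S ->
  p1 \in quad_words Q1 -> p2 \in quad_words Q2 ->
  w \in del_ball (map (qnth Q1) p1) -> w \in del_ball (map (qnth Q2) p2) ->
  map (qnth Q1) p1 = map (qnth Q2) p2.
Proof.
move=> Q1S Q2S p1Q p2Q /del_ball_mapP[z1 z1p ->] /del_ball_mapP[z2 z2p w_eq].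
have eQ := quad_word_ball_quad_eq Q1S Q2S p1Q p2Q z1p z2p w_eq; subst Q2.
have [_ z1_lt] := quad_word_ball_letters p1Q z1p; have [_ z2_lt] := quad_word_ball_letters p2Q z2p.
have qnth_inj4 : {in [pred i | i < 4] &, injective (qnth Q1)}.
  by move=> i j i4 j4; apply: (qnth_inj (quad_card Q1S)).
have z_eq : z1 = z2 by apply: (inj_in_map qnth_inj4); rewrite // inE.
by subst z2; rewrite (quad_words_ball_eq p1Q p2Q z1p z2p).
Qed.

Lemma code_word_ball_eq s1 s2 w : code_word s1 -> code_word s2 ->
  w \in del_ball s1 -> w \in del_ball s2 -> s1 = s2.
Proof.
have pair_quad a b Q p : Q \in S -> p \in quad_words Q ->
    w \in del_ball [:: a; a; b; b] -> w \in del_ball (map (qnth Q) p) -> False.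
  move=> QS pQ /(pair_word_ball a)[_ adjacent] /del_ball_mapP[z zp w_eq].
  have := quad_word_ball_adjacent QS pQ zp a; rewrite -w_eq => /andP[/negbTE n01 /negbTE n12].
  by move: adjacent; rewrite n01 n12.
case/code_wordP => [[a1 [b1 ->]]|[Q1 [p1 [Q1S p1Q ->]]]];
  case/code_wordP => [[a2 [b2 ->]]|[Q2 [p2 [Q2S p2Q ->]]]] w1 w2.
- by case: (pair_word_ball a1 w1) => -> _; case: (pair_word_ball a1 w2) => -> _.
- by case: (pair_quad _ _ _ _ Q2S p2Q w1 w2).
- by case: (pair_quad _ _ _ _ Q1S p1Q w2 w1).
exact: quad_word_ball_eq w1 w2.
Qed.

Lemma code_sdc : single_del_correcting code.
Proof.
apply/forallP => x; apply/implyP => xC; apply/forallP => y; apply/implyP => yC.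
apply/implyP => xy; apply/hasPn => w wx; apply/negP => wy.
by rewrite !inE in xC yC; move: xy; rewrite (val_inj (code_word_ball_eq xC yC wx wy)) eqxx.
Qed.

Lemma pair_word_cover a b c : (a == b) || (b == c) ->
  exists2 x, x \in code & [:: a; b; c] \in del_ball (val x).
Proof.
have pair_code (u v : 'I_q) : [tuple u; u; v; v] \in code.
  by rewrite inE; apply/orP; left; apply/existsP; exists u; apply/existsP; exists v.
case/orP => /eqP <-; first by exists [tuple a; a; c; c]; rewrite //= !inE eqxx !orbT.
by exists [tuple a; a; b; b]; rewrite //= !inE eqxx.
Qed.

Lemma quad_word_cover Q p z : Q \in S -> p \in quad_words Q -> z \in del_ball p ->
  exists2 x, x \in code & map (qnth Q) z \in del_ball (val x).
Proof.
move=> QS pQ zp; have [p_size _ _] := quad_word_props pQ.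
have x_size : size (map (qnth Q) p) == 4 by rewrite size_map p_size.
exists (Tuple x_size); last by rewrite /= del_ball_map map_f.
by rewrite inE; apply/orP; right; apply/existsP; exists Q; rewrite QS; apply/hasP; exists p.
Qed.

Lemma distinct_cover a b c : uniq [:: a; b; c] ->
  exists2 x, x \in code & [:: a; b; c] \in del_ball (val x).
Proof.
rewrite /= !inE negb_or andbT => /andP[/andP[ab ac] bc].
have [Q QS sub] := quad_of_triple (card3 ab ac bc); have Q4 := quad_card QS.
have [aQ bQ cQ] : [/\ a \in Q, b \in Q & c \in Q].
  by split; apply: (subsetP sub); rewrite !inE eqxx ?orbT.
have [ia ia4 a_eq] := qnthP Q4 aQ; have [ib ib4 b_eq] := qnthP Q4 bQ.
have [ic ic4 c_eq] := qnthP Q4 cQ; subst a b c.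
have i_uniq : uniq [:: ia; ib; ic].
  rewrite /= !inE negb_or andbT -andbA; apply/and3P.
  by split; [apply: contraNneq ab|apply: contraNneq ac|apply: contraNneq bc] => ->.
have design_Q : quad_words Q = plain_words \/ quad_words Q = top_pair_words.
  by rewrite /quad_words; case: top_pair; [right|left].
have /hasP[p pQ zp] := design_cover_distinct design_Q ia4 ib4 ic4 i_uniq.
exact: quad_word_cover QS pQ zp.
Qed.

(* The quadruple through [lo], [hi] and the partner of [hi] has its top pair
   made of [hi] and its partner, by the step property. *)
Lemma sandwich_quad (lo hi : 'I_q) : val lo < val hi -> lo != partner hi ->
  exists Q i j, [/\ Q \in S, top_pair Q, i < 2, 2 <= j < 4 & qnth Q i = lo /\ qnth Q j = hi].
Proof.
move=> lo_hi lo_c; set c := partner hi.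
have lohi : lo != hi by apply: contraTneq lo_hi => ->; rewrite ltnn.
have hic : hi != c by rewrite eq_sym partner_neq.
have [Q QS sub] := quad_of_triple (card3 lohi lo_c hic); have Q4 := quad_card QS.
have [loQ hiQ cQ] : [/\ lo \in Q, hi \in Q & c \in Q].
  by split; apply: (subsetP sub); rewrite !inE eqxx ?orbT.
have [il il4 lo_eq] := qnthP Q4 loQ; have [ih ih4 hi_eq] := qnthP Q4 hiQ.
have [ic ic4 c_eq] := qnthP Q4 cQ.
have il_ih : il < ih by rewrite -(qnth_ltn Q4) // -lo_eq -hi_eq.
have ih_ic : ih != ic by apply: contraNneq hic => e; rewrite hi_eq c_eq e.
have il_ic : il != ic by apply: contraNneq lo_c => e; rewrite lo_eq -/c c_eq e.
have same_half : (val (qnth Q ih))./2 = (val (qnth Q ic))./2 by rewrite -hi_eq -c_eq half_partner.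
exists Q; case: (ltngtP ih ic) => [lt|lt|e]; last by rewrite e eqxx in ih_ic.
  case/orP: (partner_positions QS lt ic4 same_half) => /andP[/eqP e1 /eqP e2]; subst ih ic => //.
  by exists il, 2; split => //; rewrite /top_pair same_half.
case/orP: (partner_positions QS lt ih4 (esym same_half)) => /andP[/eqP e1 /eqP e2]; subst ih ic.
  by case: il il_ih il_ic {il4 lo_eq} => [|[|]].
exists il, 3; split => //; first by rewrite /top_pair same_half.
by case: il il_ih il_ic {il4 lo_eq} => [|[|[|]]].
Qed.

Lemma sandwich_cover a b : a != b -> b != partner a ->
  exists2 x, x \in code & [:: a; b; a] \in del_ball (val x).
Proof.
move=> ab b_a.
have cover_split Q i j : Q \in S -> top_pair Q -> i < 4 -> j < 4 ->
    split_sandwich [:: i; j; i] ->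
    exists2 x, x \in code & [:: qnth Q i; qnth Q j; qnth Q i] \in del_ball (val x).
  move=> QS top i4 j4 ij_split; have /hasP[p pQ zp] := top_pair_words_cover_split i4 j4 ij_split.
  by apply: (quad_word_cover QS _ zp); rewrite /quad_words top.
case: (ltngtP (val a) (val b)) => [lt|lt|/val_inj e]; last by rewrite e eqxx in ab.
  have a_b : a != partner b by apply: contra b_a => /eqP ->; rewrite partnerK.
  have [Q [i [j [QS top i2 /andP[j2 j4] [<- <-]]]]] := sandwich_quad lt a_b.
  by apply: cover_split; rewrite // ?(ltn_trans i2) //= eqxx i2 ltnNge j2.
have [Q [i [j [QS top i2 /andP[j2 j4] [<- <-]]]]] := sandwich_quad lt b_a.
by apply: cover_split; rewrite // ?(ltn_trans i2) //= eqxx i2 ltnNge j2.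
Qed.

Local Notation triple := ('I_q * 'I_q * 'I_q)%type.

Definition partner_sandwich (y : triple) : bool := (y.1.2 == partner y.1.1) && (y.2 == y.1.1).

Lemma code_covers y : ~~ partner_sandwich y ->
  exists2 x, x \in code & trip y \in del_ball (val x).
Proof.
case: y => [[a b] c]; rewrite /partner_sandwich /trip /= => not_psw.
have [adjacent|] := boolP ((a == b) || (b == c)); first exact: pair_word_cover.
rewrite negb_or => /andP[ab bc]; have [ac|ac] := eqVneq c a.
  by subst c; move: not_psw; rewrite eqxx andbT; apply: sandwich_cover.
by apply: distinct_cover; rewrite /= !inE negb_or ab eq_sym ac bc.
Qed.

Lemma sum_partner_sandwich : \sum_(y : triple) partner_sandwich y = q.
Proof.
rewrite sum_triple -[RHS]card_ord -sum1_card; apply: eq_bigr => a _.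
transitivity (\sum_(b : 'I_q) (partner a == b)); last exact: sum_eqb1.
apply: eq_bigr => b _; rewrite /partner_sandwich /= eq_sym.
case: (partner a == b) => /=; last by rewrite big1.
by rewrite -(sum_eqb1 a); apply: eq_bigr => c _; rewrite eq_sym.
Qed.

Lemma code_card_lb : q ^ 3 + 2 * q ^ 2 + q <= #|code| * 4 + q.
Proof.
rewrite -(weight_balance code_sdc).
have -> : \sum_(x in code) ball_weight (val x) = #|code| * 4.
  by rewrite -sum1_card big_distrl; apply: eq_bigr => x; rewrite inE => /ball_weight_code_word ->.
rewrite leq_add2l -[X in _ <= X]sum_partner_sandwich; apply: leq_sum => y _.
have [psw|/code_covers[x xC yx]] := boolP (partner_sandwich y).
  case: y psw => [[a b] c]; rewrite /partner_sandwich /= => /andP[/eqP -> /eqP ->].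
  by rewrite /trip /= eq_sym (negbTE (partner_neq q_even a)) /= mul1n leq_subr.
have : 0 < cover_count code y by rewrite /cover_count (bigD1 x) //= yx.
by rewrite -subn_eq0 => /eqP ->; rewrite muln0.
Qed.

End Construction.

Theorem theorem3p1 (q : nat) (hq : 4 <= q) (heven : ~~ odd q)
  (hSQS : exists (S : {set {set 'I_q}}) (L : {perm 'I_q}),
            is_SQS S /\ step_property S L) :
  N1 4 q = q ^ 2 * (q + 2) %/ 4.
Proof.
have [S [L [S_SQS S_step]]] := hSQS.
have total : q ^ 2 * (q + 2) = q ^ 3 + 2 * q ^ 2 by rewrite mulnDr -expnSr mulnC.
apply/eqP; rewrite eqn_leq; apply/andP; split.
  apply/bigmax_leqP => C C_sdc; rewrite leq_divRL // total -(leq_add2r q).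
  exact: code_card_ub C_sdc heven.
have S'_SQS := is_SQS_relabel L S_SQS; have S'_step := step_property_relabel S_step.
apply: leq_trans (leq_bigmax_cond _ (code_sdc hq heven S'_SQS)).
rewrite -[X in _ <= X](mulnK _ (isT : 0 < 4)) leq_div2r // -(leq_add2r q).
by rewrite total; apply: code_card_lb.
Qed.
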